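(* Let $\varphi(x)=\frac{1}{\sqrt2}e^{-x^2/2}$ and define $\sigma:\mathbb R\to\mathbb R$ by $\sigma(x)=\sum_{j=1}^\infty\varphi(x-j)$. Then $\sigma$ is $1$-Lipschitz, nonnegative, bounded above by $2.5$, and $\lim_{x\to-\infty}\sigma(x)=0$. *)

From Stdlib Require Import Reals.
From Coquelicot Require Import Coquelicot.
Open Scope R_scope.

Definition phi (x : R) : R := / sqrt 2 * exp (- (x ^ 2) / 2).

(* sigma(x) = sum_{j>=1} phi(x - j); index n : nat corresponds to j = n+1 *)
Definition sigma_act (x : R) : R := Series (fun n : nat => phi (x - INR (S n))).

From Stdlib Require Import Reals Lra Lia.
From Coquelicot Require Import Coquelicot.
Open Scope R_scope.

(* Write phi = gauss / sqrt 2 with gauss s = exp (- s^2 / 2), and psi s = s * gauss s, so that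
   phi' = - psi / sqrt 2.  The points x - j (j >= 1) split into those in [0, +oo) and those in
   (-oo, 0); on each side the sum of a function p >= 0 over a lattice e + N, e >= 0, is bounded
   by its supremum over e in [0, 1], because shifting e by 1 only drops a nonnegative term.
   With q = exp (-1/2) <= 25/41 we have gauss k = q^(k^2), which gives
   sum_k gauss (e + k) <= 5/4 * 141/100, and a three-term head plus a geometric tail gives
   sum_k psi (e + k) <= 141/100 for e in [0, 1]; since 141/100 <= sqrt 2, the partial sums of
   sigma lie in [0, 5/2] and their derivatives (psi is odd, so the two sides enter with
   opposite signs) are bounded by 1 in absolute value.  These bounds pass to the limit.
   Finally phi (x - j) <= exp (x - 1/2 - (j - 1)) / sqrt 2, so sigma x = O (exp x) at -oo. *)

Lemma sum_f_R0_rev (a : nat -> R) (N : nat) :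
  sum_f_R0 a N = sum_f_R0 (fun n => a (N - n)%nat) N.
Proof.
  induction N as [|N IH]; [reflexivity|].
  rewrite tech5, (decomp_sum (fun n => a (S N - n)%nat)) by lia.
  simpl. rewrite <- IH. ring.
Qed.

Lemma sum_f_R0_scal_l (c : R) (a : nat -> R) (N : nat) :
  sum_f_R0 (fun n => c * a n) N = c * sum_f_R0 a N.
Proof.
  transitivity (sum_f_R0 (fun n => a n * c) N); [apply sum_eq; intros; ring |].
  rewrite scal_sum. ring.
Qed.

Lemma sum_f_R0_le_head_geometric_tail (a : nat -> R) (m : nat) (C rho T : R) :
  (forall n, 0 <= a n) -> 0 <= rho < 1 -> C <= T * (1 - rho) ->
  (forall j, a (S m + j)%nat <= C * rho ^ j) ->
  forall K, sum_f_R0 a K <= sum_f_R0 a m + T.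
Proof.
  intros a_ge0 rho_bounds C_le tail_le K.
  assert (C_ge0 : 0 <= C).
  { specialize (tail_le 0%nat). specialize (a_ge0 (S m + 0)%nat).
    rewrite pow_O, Rmult_1_r in tail_le. lra. }
  assert (head_le : sum_f_R0 a K <= sum_f_R0 a (S m + K)).
  { rewrite (tech2 a K (S m + K)) by lia.
    assert (0 <= sum_f_R0 (fun i => a (S K + i)%nat) (S m + K - S K))
      by (apply cond_pos_sum; auto).
    lra. }
  rewrite (tech2 a m (S m + K)), Nat.add_comm, Nat.add_sub in head_le by lia.
  set (s := sum_f_R0 (fun j => rho ^ j) K).
  assert (tail_sum_le : sum_f_R0 (fun i => a (S m + i)%nat) K <= C * s).
  { unfold s. rewrite scal_sum. apply sum_Rle. intros j _. rewrite Rmult_comm. apply tail_le. }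
  assert (geom_le : s * (1 - rho) <= 1).
  { pose proof (GP_finite rho K). pose proof (pow_le rho (K + 1) ltac:(lra)). unfold s. lra. }
  assert (C * s <= T).
  { apply Rmult_le_reg_r with (1 - rho); [lra|]. nra. }
  lra.
Qed.

Section HalfLineLatticeSums.

Variables (p : R -> R) (M : R).
Hypothesis p_ge0 : forall s, 0 <= s -> 0 <= p s.
Hypothesis lattice_sum_unit_le :
  forall e, 0 <= e <= 1 -> forall K, sum_f_R0 (fun k => p (e + INR k)) K <= M.

Lemma lattice_sum_le e : 0 <= e -> forall K, sum_f_R0 (fun k => p (e + INR k)) K <= M.
Proof.
  intros e_ge0. destruct (nfloor_ex e e_ge0) as [n e_bounds].
  revert e e_ge0 e_bounds. induction n as [|n IH]; intros e e_ge0 e_bounds K.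
  - apply lattice_sum_unit_le. simpl in e_bounds. lra.
  - rewrite S_INR in e_bounds. pose proof (pos_INR n).
    specialize (IH (e - 1) ltac:(lra) ltac:(lra) (S K)).
    rewrite decomp_sum in IH by lia. simpl pred in IH.
    replace (sum_f_R0 (fun i => p (e - 1 + INR (S i))) K)
      with (sum_f_R0 (fun k => p (e + INR k)) K) in IH
      by (apply sum_eq; intros i _; rewrite S_INR; f_equal; ring).
    assert (0 <= p (e - 1 + INR 0)) by (apply p_ge0; simpl; lra).
    lra.
Qed.

Definition restrict_half (t : R) : R := if Rle_dec 0 t then p t else 0.

Lemma restrict_half_ge0 t : 0 <= restrict_half t.
Proof. unfold restrict_half. destruct (Rle_dec 0 t); [auto | lra]. Qed.

Lemma lattice_bound_ge0 : 0 <= M.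
Proof.
  pose proof (lattice_sum_unit_le 0 ltac:(lra) 0) as p0_le. simpl in p0_le.
  pose proof (p_ge0 (0 + 0) ltac:(lra)). lra.
Qed.

Lemma restrict_half_sum_nonneg_le c N :
  0 <= c -> sum_f_R0 (fun n => restrict_half (c + INR n)) N <= M.
Proof.
  intros c_ge0. rewrite (sum_eq _ (fun n => p (c + INR n))); [now apply lattice_sum_le |].
  intros i _. unfold restrict_half. pose proof (pos_INR i).
  destruct (Rle_dec 0 (c + INR i)); [reflexivity | lra].
Qed.

Lemma restrict_half_sum_le c N : sum_f_R0 (fun n => restrict_half (c + INR n)) N <= M.
Proof.
  revert c. induction N as [|N IH]; intros c;
    (destruct (Rle_dec 0 c) as [c_ge0 | c_lt0]; [now apply restrict_half_sum_nonneg_le |]).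
  - simpl. unfold restrict_half. pose proof lattice_bound_ge0.
    destruct (Rle_dec 0 (c + 0)); lra.
  - rewrite decomp_sum by lia. simpl pred.
    replace (sum_f_R0 (fun i => restrict_half (c + INR (S i))) N)
      with (sum_f_R0 (fun n => restrict_half (c + 1 + INR n)) N)
      by (apply sum_eq; intros i _; rewrite S_INR; f_equal; ring).
    specialize (IH (c + 1)). unfold restrict_half at 1. simpl INR.
    destruct (Rle_dec 0 (c + 0)); lra.
Qed.

Lemma restrict_half_sum_shift_le x N :
  sum_f_R0 (fun n => restrict_half (x - INR (S n))) N <= M /\
  sum_f_R0 (fun n => restrict_half (- (x - INR (S n)))) N <= M.
Proof.
  split.
  - rewrite sum_f_R0_rev, (sum_eq _ (fun n => restrict_half (x - INR (S N) + INR n))).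
    + apply restrict_half_sum_le.
    + intros i i_le. rewrite (S_INR (N - i)), minus_INR, S_INR by exact i_le. f_equal. ring.
  - rewrite (sum_eq _ (fun n => restrict_half (1 - x + INR n))).
    + apply restrict_half_sum_le.
    + intros i _. rewrite S_INR. f_equal. ring.
Qed.

End HalfLineLatticeSums.

Lemma exp_le_compat a b : a <= b -> exp a <= exp b.
Proof. intros [lt | ->]; [left; apply exp_increasing; exact lt | right; reflexivity]. Qed.

Lemma exp_nat_mul (n : nat) (a : R) : exp (INR n * a) = exp a ^ n.
Proof.
  induction n as [|n IH].
  - simpl. rewrite Rmult_0_l. apply exp_0.
  - rewrite S_INR, Rmult_plus_distr_r, Rmult_1_l, exp_plus, IH. simpl. ring.
Qed.

Lemma exp_opp_le x a : 0 < a <= exp x -> exp (- x) <= / a.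
Proof. intros. rewrite exp_Ropp. apply Rinv_le_contravar; lra. Qed.

Lemma exp_neg_eighth_le : exp (- (1 / 8)) <= 8 / 9.
Proof.
  replace (8 / 9) with (/ (9 / 8)) by field.
  apply exp_opp_le. pose proof (exp_ineq1_le (1 / 8)). lra.
Qed.

Lemma pow2_ge_succ (j : nat) : 1 + INR j <= 2 ^ j.
Proof.
  induction j as [|j IH]; [simpl; lra |].
  rewrite S_INR. simpl. pose proof (pos_INR j). lra.
Qed.

Lemma sqrt2_pos : 0 < sqrt 2.
Proof. apply sqrt_lt_R0. lra. Qed.

Lemma sqrt2_ge : 141 / 100 <= sqrt 2.
Proof. rewrite <- (sqrt_square (141 / 100)) by lra. apply sqrt_le_1_alt. lra. Qed.

Definition gauss (s : R) : R := exp (- s ^ 2 / 2).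

Local Notation q := (exp (- (1 / 2))).

Lemma gauss_pos s : 0 < gauss s.
Proof. apply exp_pos. Qed.

Lemma gauss_opp s : gauss (- s) = gauss s.
Proof. unfold gauss. replace ((- s) ^ 2) with (s ^ 2) by ring. reflexivity. Qed.

Lemma gauss_antitone a b : 0 <= a <= b -> gauss b <= gauss a.
Proof.
  intros ab. apply exp_le_compat. nra.
Qed.

Lemma gauss_nat (k : nat) : gauss (INR k) = q ^ (k * k).
Proof. unfold gauss. rewrite <- exp_nat_mul, mult_INR. f_equal. field. Qed.

Lemma q_bounds : 0 <= q <= 25 / 41.
Proof.
  split; [left; apply exp_pos |].
  replace (25 / 41) with (/ (41 / 25)) by field.
  apply exp_opp_le.
  pose proof (exp_ge_taylor (1 / 2) 4 ltac:(lra)) as taylor. simpl in taylor. lra.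
Qed.

Lemma q_pow_le n : 0 <= q ^ n <= (25 / 41) ^ n.
Proof.
  pose proof q_bounds. split; [apply pow_le; lra | apply pow_incr; lra].
Qed.

Lemma q_pow_sq_tail j : q ^ ((3 + j) * (3 + j)) <= q ^ 9 * (q ^ 6) ^ j.
Proof.
  replace ((3 + j) * (3 + j))%nat with (9 + 6 * j + j * j)%nat by lia.
  rewrite <- pow_mult, !pow_add.
  pose proof q_bounds. pose proof (q_pow_le 9). pose proof (q_pow_le (6 * j)).
  assert (q ^ (j * j) <= 1 ^ (j * j)) by (apply pow_incr; lra).
  rewrite pow1 in *. rewrite <- (Rmult_1_r (q ^ 9 * q ^ (6 * j))) at 2.
  apply Rmult_le_compat_l; nra.
Qed.

Lemma gauss_lattice_sum_le e : 0 <= e ->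
  forall K, sum_f_R0 (fun k => gauss (e + INR k)) K <= 141 / 80.
Proof.
  intros e_ge0 K.
  apply Rle_trans with (sum_f_R0 (fun k => q ^ (k * k)) K).
  { apply sum_Rle. intros k _. rewrite <- gauss_nat.
    apply gauss_antitone. pose proof (pos_INR k). lra. }
  pose proof (q_pow_le 1) as q1. pose proof (q_pow_le 4) as q4.
  pose proof (q_pow_le 6) as q6. pose proof (q_pow_le 9) as q9. simpl in q1, q4, q6, q9.
  apply Rle_trans with (sum_f_R0 (fun k => q ^ (k * k)) 2 + 125 / 10000).
  - apply sum_f_R0_le_head_geometric_tail with (C := q ^ 9) (rho := q ^ 6).
    + intros n. apply pow_le. lra.
    + lra.
    + lra.
    + apply q_pow_sq_tail.
  - simpl. lra.
Qed.

Definition psi (s : R) : R := s * gauss s.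

Lemma psi_ge0 s : 0 <= s -> 0 <= psi s.
Proof. intros. pose proof (gauss_pos s). unfold psi. nra. Qed.

Lemma psi_opp s : psi (- s) = - psi s.
Proof. unfold psi. rewrite gauss_opp. ring. Qed.

Lemma psi_le_q s : 0 <= s -> psi s <= q.
Proof.
  intros s_ge0. unfold psi, gauss.
  replace (- (1 / 2)) with (- s ^ 2 / 2 + (s ^ 2 - 1) / 2) by field.
  rewrite exp_plus.
  pose proof (exp_ineq1_le ((s ^ 2 - 1) / 2)). pose proof (exp_pos (- s ^ 2 / 2)).
  assert (0 <= (s - 1) ^ 2) by apply pow2_ge_0.
  nra.
Qed.

Lemma psi_antitone a b : 1 <= a <= b -> psi b <= psi a.
Proof.
  intros ab. unfold psi, gauss.
  replace (- a ^ 2 / 2) with (- b ^ 2 / 2 + (b ^ 2 - a ^ 2) / 2) by field.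
  rewrite exp_plus.
  pose proof (exp_ineq1_le ((b ^ 2 - a ^ 2) / 2)). pose proof (exp_pos (- b ^ 2 / 2)).
  assert (b <= a * exp ((b ^ 2 - a ^ 2) / 2)).
  { assert (0 <= (b - a) * (a * (a + b) / 2 - 1)) by (apply Rmult_le_pos; nra). nra. }
  nra.
Qed.

Lemma psi_le_small s : 0 <= s <= 1 / 2 -> psi s <= 4 / 9.
Proof.
  intros s_bounds. unfold psi, gauss.
  assert (inv : exp (- s ^ 2 / 2) * exp (s ^ 2 / 2) = 1).
  { rewrite <- exp_plus, <- exp_0. f_equal. field. }
  pose proof (exp_ineq1_le (s ^ 2 / 2)). pose proof (exp_pos (- s ^ 2 / 2)).
  nra.
Qed.

Lemma gauss_nat_half (k : nat) : gauss (INR k + 1 / 2) = q ^ (k * S k) * exp (- (1 / 8)).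
Proof.
  unfold gauss. rewrite <- exp_nat_mul, <- exp_plus, mult_INR, S_INR. f_equal. field.
Qed.

Lemma psi_head_le e : 0 <= e <= 1 -> psi e + psi (e + 1) + psi (e + 2) <= 137 / 100.
Proof.
  intros e_bounds.
  pose proof q_bounds. pose proof (q_pow_le 2) as q2. pose proof (q_pow_le 4) as q4.
  pose proof (q_pow_le 6) as q6. simpl in q2, q4, q6.
  destruct (Rle_dec e (1 / 2)) as [e_small | e_large].
  - assert (psi (e + 2) <= psi 2) by (apply psi_antitone; lra).
    assert (psi 2 = 2 * q ^ 4).
    { unfold psi. replace 2 with (INR 2) by reflexivity. rewrite gauss_nat. reflexivity. }
    pose proof (psi_le_small e ltac:(lra)). pose proof (psi_le_q (e + 1) ltac:(lra)).
    lra.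
  - assert (psi (e + 1) <= 3 / 2 * (q ^ 2 * exp (- (1 / 8)))).
    { apply Rle_trans with (psi (INR 1 + 1 / 2)); [apply psi_antitone; simpl; lra |].
      unfold psi. rewrite gauss_nat_half. simpl. lra. }
    assert (psi (e + 2) <= 5 / 2 * (q ^ 6 * exp (- (1 / 8)))).
    { apply Rle_trans with (psi (INR 2 + 1 / 2)); [apply psi_antitone; simpl; lra |].
      unfold psi. rewrite gauss_nat_half. simpl. lra. }
    pose proof exp_neg_eighth_le. pose proof (exp_pos (- (1 / 8))).
    pose proof (psi_le_q e ltac:(lra)).
    nra.
Qed.

Lemma psi_tail_le e j : 0 <= e -> psi (e + INR (3 + j)) <= 3 * q ^ 9 * (2 * q ^ 6) ^ j.
Proof.
  intros e_ge0. pose proof (pos_INR j).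
  apply Rle_trans with (psi (INR (3 + j))).
  { apply psi_antitone. rewrite plus_INR. simpl. lra. }
  unfold psi. rewrite gauss_nat, Rpow_mult_distr.
  pose proof (q_pow_sq_tail j). pose proof (pow2_ge_succ j).
  pose proof (q_pow_le ((3 + j) * (3 + j))).
  pose proof (q_pow_le 9). pose proof (pow_le (q ^ 6) j ltac:(pose proof (q_pow_le 6); lra)).
  rewrite plus_INR. simpl INR.
  nra.
Qed.

Lemma psi_lattice_sum_le e : 0 <= e <= 1 ->
  forall K, sum_f_R0 (fun k => psi (e + INR k)) K <= 141 / 100.
Proof.
  intros e_bounds K.
  pose proof (q_pow_le 6) as q6. pose proof (q_pow_le 9) as q9. simpl in q6, q9.
  apply Rle_trans with (sum_f_R0 (fun k => psi (e + INR k)) 2 + 4 / 100).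
  - apply sum_f_R0_le_head_geometric_tail with (C := 3 * q ^ 9) (rho := 2 * q ^ 6).
    + intros n. apply psi_ge0. pose proof (pos_INR n). lra.
    + lra.
    + lra.
    + intros j. apply psi_tail_le. lra.
  - simpl. replace (e + 0) with e by ring. replace (e + (1 + 1)) with (e + 2) by ring.
    pose proof (psi_head_le e e_bounds). lra.
Qed.

Lemma phi_pos s : 0 < phi s.
Proof. apply Rmult_lt_0_compat; [apply Rinv_0_lt_compat, sqrt2_pos | apply exp_pos]. Qed.

Lemma gauss_le_restrict_half t : gauss t <= restrict_half gauss t + restrict_half gauss (- t).
Proof.
  unfold restrict_half. rewrite gauss_opp. pose proof (gauss_pos t).
  destruct (Rle_dec 0 t), (Rle_dec 0 (- t)); lra.
Qed.

Lemma psi_opp_restrict_half t : - psi t = restrict_half psi (- t) - restrict_half psi t.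
Proof.
  unfold restrict_half. rewrite psi_opp.
  destruct (Rle_dec 0 t), (Rle_dec 0 (- t)); try lra.
  replace t with 0 by lra. unfold psi. ring.
Qed.

Definition sigma_partial (N : nat) (x : R) : R := sum_f_R0 (fun n => phi (x - INR (S n))) N.

Definition dsigma_partial (N : nat) (x : R) : R :=
  sum_f_R0 (fun n => / sqrt 2 * - psi (x - INR (S n))) N.

Lemma sigma_partial_ge0 N x : 0 <= sigma_partial N x.
Proof. apply cond_pos_sum. intros n. left. apply phi_pos. Qed.

Lemma sigma_partial_le N x : sigma_partial N x <= 5 / 2.
Proof.
  assert (gauss_ge0 : forall s, 0 <= s -> 0 <= gauss s) by (intros s _; left; apply gauss_pos).
  destruct (restrict_half_sum_shift_le gauss (141 / 80) gauss_ge0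
              (fun e e_bounds => gauss_lattice_sum_le e (proj1 e_bounds)) x N)
    as [right_le left_le].
  unfold sigma_partial.
  rewrite (sum_eq _ (fun n => / sqrt 2 * gauss (x - INR (S n)))), sum_f_R0_scal_l
    by reflexivity.
  apply Rle_trans with (/ sqrt 2 * (2 * (141 / 80))).
  - apply Rmult_le_compat_l; [left; apply Rinv_0_lt_compat, sqrt2_pos |].
    apply Rle_trans with (sum_f_R0 (fun n => restrict_half gauss (x - INR (S n))) N
                          + sum_f_R0 (fun n => restrict_half gauss (- (x - INR (S n)))) N).
    + rewrite <- plus_sum. apply sum_Rle. intros n _. apply gauss_le_restrict_half.
    + lra.
  - pose proof sqrt2_ge. apply Rmult_le_reg_l with (sqrt 2); [lra |].
    rewrite <- Rmult_assoc, Rinv_r by lra. lra.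
Qed.

Lemma dsigma_partial_abs_le N x : Rabs (dsigma_partial N x) <= 1.
Proof.
  destruct (restrict_half_sum_shift_le psi (141 / 100) psi_ge0 psi_lattice_sum_le x N)
    as [right_le left_le].
  pose proof (cond_pos_sum _ N (fun n => restrict_half_ge0 psi psi_ge0 (x - INR (S n)))).
  pose proof (cond_pos_sum _ N (fun n => restrict_half_ge0 psi psi_ge0 (- (x - INR (S n))))).
  unfold dsigma_partial. rewrite sum_f_R0_scal_l.
  rewrite (sum_eq _ (fun n => restrict_half psi (- (x - INR (S n)))
                             - restrict_half psi (x - INR (S n))))
    by (intros; apply psi_opp_restrict_half).
  rewrite minus_sum, Rabs_mult, Rabs_inv, Rabs_pos_eq by (left; apply sqrt2_pos).
  pose proof sqrt2_ge. apply Rmult_le_reg_l with (sqrt 2); [lra |].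
  rewrite <- Rmult_assoc, Rinv_r, Rmult_1_l, Rmult_1_r by lra.
  apply Rabs_le. lra.
Qed.

Lemma phi_shift_derive c x : is_derive (fun y => phi (y - c)) x (/ sqrt 2 * - psi (x - c)).
Proof.
  unfold phi, psi, gauss. auto_derive; [exact I |].
  replace (- ((x + - c) * ((x + - c) * 1)) * / 2) with (- (x - c) ^ 2 / 2) by field.
  field. apply Rgt_not_eq, sqrt2_pos.
Qed.

Lemma sigma_partial_derive N x : is_derive (sigma_partial N) x (dsigma_partial N x).
Proof.
  induction N as [|N IH]; [apply phi_shift_derive |].
  apply (is_derive_plus (sigma_partial N) (fun y => phi (y - INR (S (S N))))); [exact IH |].
  apply phi_shift_derive.
Qed.

Lemma sigma_partial_lipschitz N x y :
  Rabs (sigma_partial N x - sigma_partial N y) <= Rabs (x - y).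
Proof.
  destruct (MVT_cor4 (sigma_partial N) (dsigma_partial N) y (Rabs (x - y))
              (fun c _ => sigma_partial_derive N c) x (Rle_refl _)) as [c [mvt _]].
  rewrite mvt, Rabs_mult.
  pose proof (dsigma_partial_abs_le N c). pose proof (Rabs_pos (x - y)). nra.
Qed.

Lemma phi_shift_le_geom x n :
  phi (x - INR (S n)) <= exp (-1) ^ n * (exp x * (/ sqrt 2 * q)).
Proof.
  unfold phi. rewrite <- exp_nat_mul, <- !Rmult_assoc, (Rmult_comm _ (/ sqrt 2)), !Rmult_assoc.
  apply Rmult_le_compat_l; [left; apply Rinv_0_lt_compat, sqrt2_pos |].
  rewrite <- !exp_plus. apply exp_le_compat. rewrite S_INR.
  assert (0 <= (x - INR n) ^ 2) by apply pow2_ge_0. nra.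
Qed.

Lemma is_series_sigma_dominant x :
  is_series (fun n => exp (-1) ^ n * (exp x * (/ sqrt 2 * q)))
            (/ (1 - exp (-1)) * (exp x * (/ sqrt 2 * q))).
Proof.
  apply is_series_scal_r, is_series_geom.
  rewrite Rabs_pos_eq by (left; apply exp_pos).
  rewrite <- exp_0. apply exp_increasing. lra.
Qed.

Lemma sigma_partial_cvg x : is_lim_seq (fun N => sigma_partial N x) (sigma_act x).
Proof.
  assert (summable : ex_series (fun n => phi (x - INR (S n)))).
  { apply (@ex_series_le R_AbsRing R_CompleteNormedModule _
             (fun n => exp (-1) ^ n * (exp x * (/ sqrt 2 * q)))).
    - intros n. change (norm (phi (x - INR (S n)))) with (Rabs (phi (x - INR (S n)))).
      rewrite Rabs_pos_eq by (left; apply phi_pos).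
      apply phi_shift_le_geom.
    - eexists. apply is_series_sigma_dominant. }
  apply is_lim_seq_ext with (sum_n (fun n => phi (x - INR (S n)))).
  - intros N. apply sum_n_Reals.
  - apply Series_correct, summable.
Qed.

Lemma sigma_ge0 x : 0 <= sigma_act x.
Proof.
  exact (is_lim_seq_le (fun _ => 0) (fun N => sigma_partial N x) 0 (sigma_act x)
           (fun N => sigma_partial_ge0 N x) (is_lim_seq_const 0) (sigma_partial_cvg x)).
Qed.

Lemma sigma_le x : sigma_act x <= 5 / 2.
Proof.
  exact (is_lim_seq_le (fun N => sigma_partial N x) (fun _ => 5 / 2) (sigma_act x) (5 / 2)
           (fun N => sigma_partial_le N x) (sigma_partial_cvg x) (is_lim_seq_const _)).
Qed.

Lemma sigma_lipschitz x y : Rabs (sigma_act x - sigma_act y) <= Rabs (x - y).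
Proof.
  pose proof (is_lim_seq_minus' _ _ _ _ (sigma_partial_cvg x) (sigma_partial_cvg y)) as diff_cvg.
  exact (is_lim_seq_le _ (fun _ => Rabs (x - y)) (Rabs (sigma_act x - sigma_act y)) _
           (fun N => sigma_partial_lipschitz N x y) (is_lim_seq_abs _ _ diff_cvg)
           (is_lim_seq_const _)).
Qed.

Lemma sigma_le_exp x : sigma_act x <= / (1 - exp (-1)) * (exp x * (/ sqrt 2 * q)).
Proof.
  unfold sigma_act. rewrite <- (is_series_unique _ _ (is_series_sigma_dominant x)).
  apply Series_le; [| eexists; apply is_series_sigma_dominant].
  intros n. split; [left; apply phi_pos | apply phi_shift_le_geom].
Qed.

Lemma sigma_lim_m_infty : is_lim sigma_act m_infty 0.
Proof.
  set (c := / (1 - exp (-1)) * (/ sqrt 2 * q)).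
  apply (is_lim_le_le_loc (fun _ => 0) (fun y => c * exp y)).
  - apply filter_forall. intros y. split; [apply sigma_ge0 |].
    eapply Rle_trans; [apply sigma_le_exp | right; unfold c; ring].
  - apply is_lim_const.
  - replace (Finite 0) with (Rbar_mult c 0) by (simpl; f_equal; ring).
    apply is_lim_scal_l, is_lim_exp_m.
Qed.

Theorem lemma1 :
  (forall x y : R, Rabs (sigma_act x - sigma_act y) <= Rabs (x - y)) /\
  (forall x : R, 0 <= sigma_act x) /\
  (forall x : R, sigma_act x <= 5 / 2) /\
  is_lim sigma_act m_infty 0.
Proof.
  exact (conj sigma_lipschitz (conj sigma_ge0 (conj sigma_le sigma_lim_m_infty))).
Qed.
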